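(* Let $R$ be a commutative multiplicative hyperring with identity having the zero absorbing property, let $\alpha$ be a good endomorphism of $R$, and let $I$ be a hyperideal of $R$. Suppose that for all $a,b\in R$, $a\circ b\subseteq I$ implies $a\in I$ or $\alpha(b^n)\subseteq I$ for some $n\in\mathbb N$. Then $\sqrt[\alpha]{I}$ is an $\alpha$-prime hyperideal of $R$.
   Context: A multiplicative hyperring is an abelian group $(R,+)$ with a hyperoperation $\circ:R\times R\to \mathcal P^*(R)$ (nonempty subsets) such that $a\circ(b\circ c)=(a\circ b)\circ c$, $a\circ(b+c)\subseteq a\circ b+a\circ c$, $(b+c)\circ a\subseteq b\circ a+c\circ a$, and $a\circ(-b)=(-a)\circ b=-(a\circ b)$. Products of subsets are unions of elementwise products, and $x^n=x\circ\cdots\circ x$ ($n$ factors). Commutative means $a\circ b=b\circ a$. An identity $1$ satisfies $a\in1\circ a$ for all $a$. $R$ has the zero absorbing property if $0\circ r=r\circ0=\{0\}$ for all $r$. A hyperideal is a nonempty $I$ closed under subtraction with $r\circ x\subseteq I$ for $r\in R$, $x\in I$. Standing assumption: all hyperideals are $\mathbf C$-hyperideals, i.e. for every finite product $A=r_1\circ\cdots\circ r_n$, $A\cap I\ne\emptyset$ implies $A\subseteq I$. A good endomorphism $\alpha$ satisfies $\alpha(x+y)=\alpha(x)+\alpha(y)$ and $\alpha(x\circ y)=\alpha(x)\circ\alpha(y)$; it is applied to sets elementwise. The $\alpha$-radical is $\sqrt[\alpha]{I}=\{r:\alpha(r^n)\subseteq I\text{ for some }n\in\mathbb N\}$. A hyperideal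 $J$ is $\alpha$-prime if for all $x,y$, $x\circ y\subseteq J$ implies $x\in J$ or $\alpha(y)\in J$. *)

From mathcomp Require Import all_boot all_algebra.
Set Implicit Arguments. Unset Strict Implicit. Unset Printing Implicit Defensive.
Import GRing.Theory.
Local Open Scope ring_scope.

Definition hset (R : Type) := R -> Prop.
Definition hsub (R : Type) (A B : hset R) : Prop := forall x, A x -> B x.
Definition hsingle (R : Type) (a : R) : hset R := fun x => x = a.

Section Hyper.
Variable R : zmodType.
Variable hm : R -> R -> hset R.

Definition hprodS (A B : hset R) : hset R :=
  fun z => exists a b, A a /\ B b /\ hm a b z.
Definition hsumS (A B : hset R) : hset R :=
  fun z => exists a b, A a /\ B b /\ z = a + b.
Definition hopp (A : hset R) : hset R := fun z => A (- z).
Definition himg (f : R -> R) (A : hset R) : hset R :=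
  fun z => exists a, A a /\ z = f a.

Definition hseteq (A B : hset R) := hsub A B /\ hsub B A.

Definition mult_hyperring : Prop :=
  (forall a b, exists z, hm a b z) /\
  (forall a b c, hseteq (hprodS (hsingle a) (hm b c)) (hprodS (hm a b) (hsingle c))) /\
  (forall a b c, hsub (hm a (b + c)) (hsumS (hm a b) (hm a c))) /\
  (forall a b c, hsub (hm (b + c) a) (hsumS (hm b a) (hm c a))) /\
  (forall a b, hseteq (hm a (- b)) (hopp (hm a b)) /\ hseteq (hm (- a) b) (hopp (hm a b))).

Definition hcommutative : Prop := forall a b, hseteq (hm a b) (hm b a).
Definition hidentity (one : R) : Prop := forall a, hm one a a.
Definition zero_absorbing : Prop :=
  forall r, hseteq (hm 0 r) (hsingle 0) /\ hseteq (hm r 0) (hsingle 0).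

Fixpoint hprodL_aux (A : hset R) (l : seq R) : hset R :=
  match l with
  | [::] => A
  | r :: l' => hprodL_aux (hprodS A (hsingle r)) l'
  end.
Definition hprodL (r : R) (l : seq R) : hset R := hprodL_aux (hsingle r) l.

(* x^n = x o ... o x (n factors), meaningful for n >= 1; hpow x 0 := {x} is never used *)
Definition hpow (x : R) (n : nat) : hset R := hprodL x (nseq n.-1 x).

Definition hyperideal (I : hset R) : Prop :=
  (exists x, I x) /\
  (forall x y, I x -> I y -> I (x - y)) /\
  (forall r x, I x -> hsub (hm r x) I).

Definition C_hyperideal (I : hset R) : Prop :=
  hyperideal I /\
  forall (r : R) (l : seq R),
    (exists z, hprodL r l z /\ I z) -> hsub (hprodL r l) I.

Definition good_endo (alpha : R -> R) : Prop :=
  (forall x y, alpha (x + y) = alpha x + alpha y) /\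
  (forall x y, hseteq (himg alpha (hm x y)) (hm (alpha x) (alpha y))).

Definition alpha_radical (alpha : R -> R) (I : hset R) : hset R :=
  fun r => exists n : nat, (0 < n)%N /\ hsub (himg alpha (hpow r n)) I.

Definition alpha_prime (alpha : R -> R) (J : hset R) : Prop :=
  C_hyperideal J /\
  forall x y, hsub (hm x y) J -> J x \/ J (alpha y).

End Hyper.

From mathcomp Require Import all_boot all_algebra.
From mathcomp Require Import zify.
Set Implicit Arguments. Unset Strict Implicit. Unset Printing Implicit Defensive.
Import GRing.Theory.
Local Open Scope ring_scope.

(* The alpha-radical of I is the ordinary radical of the hyperideal alpha^-1(I), hence a
   hyperideal: closure under addition comes from expanding (x + y)^(n+m+2) as a sum of
   monomials x^i o y^j, each of which has i > n or j > m.  For primeness, if x o y lies in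
   the radical, pick z in x o y and w in z^(n+1) with alpha(w) in I; then w lies in a o b
   with a in x^(n+1) and b in y^(n+1).  The C-property spreads membership in I from alpha(w)
   to all of alpha(a) o alpha(b), so the hypothesis on I applies to alpha(a) and alpha(b);
   the C-property again spreads membership in I from one element of a power to the whole
   power, which puts x or alpha(y) in the radical. *)

Lemma nseqS_rcons (T : Type) n (x : T) : nseq n.+1 x = rcons (nseq n x) x.
Proof. by elim: n => //= n ->. Qed.

Section HyperringPowers.
Variables (R : zmodType) (hm : R -> R -> hset R).

Lemma hprodL_aux_rcons (A : hset R) l r z :
  hprodL_aux hm A (rcons l r) z <-> exists a, hprodL_aux hm A l a /\ hm a r z.
Proof.
elim: l A => [|c l IH] A /=; last exact: IH.
split=> [[a [b [Aa [-> Hz]]]]|[a [Aa Hz]]]; first by exists a.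
by exists a, r.
Qed.

Lemma hprodL1 a b z : hprodL hm a [:: b] z <-> hm a b z.
Proof. by split=> [[_ [_ [-> [-> Hz]]]] //|Hz]; exists a, b. Qed.

Lemma hpow1 r z : hpow hm r 1 z <-> z = r.
Proof. by []. Qed.

Lemma hpowS r n z : hpow hm r n.+2 z <-> exists a, hpow hm r n.+1 a /\ hm a r z.
Proof. by rewrite /hpow /hprodL -[n.+2.-1]/n.+1 nseqS_rcons hprodL_aux_rcons. Qed.

Hypothesis hmR : mult_hyperring hm.

Lemma hm_nonempty a b : exists z, hm a b z.
Proof. by case: hmR. Qed.

Lemma hmA_lr a b c w u : hm a b w -> hm w c u -> exists v, hm b c v /\ hm a v u.
Proof.
move=> Hw Hu; have [_ [hmA _]] := hmR.
have [_ [v [-> [Hv Hu']]]] : hprodS hm (hsingle a) (hm b c) u.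
  by apply: (hmA a b c).2; exists w, c.
by exists v.
Qed.

Lemma hmA_rl a b c v u : hm b c v -> hm a v u -> exists w, hm a b w /\ hm w c u.
Proof.
move=> Hv Hu; have [_ [hmA _]] := hmR.
have [w [_ [Hw [-> Hu']]]] : hprodS hm (hm a b) (hsingle c) u.
  by apply: (hmA a b c).1; exists a, v.
by exists w.
Qed.

Lemma hpow_ex r n : exists z, hpow hm r n.+1 z.
Proof.
elim: n => [|n [a Ha]]; first by exists r.
by have [z Hz] := hm_nonempty a r; exists z; apply/hpowS; exists a.
Qed.

Lemma hpowD r i j a b c : (0 < i)%N -> (0 < j)%N ->
  hpow hm r i a -> hpow hm r j b -> hm a b c -> hpow hm r (i + j) c.
Proof.
case: i => // i _; case: j => // j _ Ha.
elim: j b c => [|j IH] b c.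
  by move=> /hpow1 -> Hc; rewrite addn1; apply/hpowS; exists a.
case/hpowS=> b' [Hb' Hb] Hc.
have [d [Hd Hc']] := hmA_rl Hb Hc.
by rewrite addnS; apply/hpowS; exists d; split; first exact: IH Hb' Hd.
Qed.

Lemma hpowM r n m a e :
  hpow hm r n.+1 a -> hpow hm a m.+1 e -> hpow hm r (n.+1 * m.+1) e.
Proof.
move=> Ha; elim: m e => [|m IH] e; first by move=> /hpow1 ->; rewrite muln1.
case/hpowS=> e' [He' He]; rewrite mulnS addnC.
by apply: hpowD (IH _ He') Ha He; rewrite ?muln_gt0.
Qed.

Lemma hpow_opp r n z :
  hpow hm (- r) n.+1 z -> hpow hm r n.+1 z \/ hpow hm r n.+1 (- z).
Proof.
elim: n z => [|n IH] z; first by move=> /hpow1 ->; right; rewrite opprK.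
case/hpowS=> a [Ha Hz]; have [_ [_ [_ [_ hmN]]]] := hmR.
have [[hmNr _] [_ hmNl]] := hmN a r.
have Hz' : hm a r (- z) by apply: hmNr.
case: (IH _ Ha) => Ha'; first by right; apply/hpowS; exists a.
by left; apply/hpowS; exists (- a); split; last exact: hmNl.
Qed.

Hypothesis hmC : hcommutative hm.

Lemma hm_comm a b z : hm a b z -> hm b a z.
Proof. exact: (hmC a b).1. Qed.

Lemma hpowMn r x z n w : hm r x z -> hpow hm z n.+1 w ->
  exists a b, hpow hm r n.+1 a /\ hpow hm x n.+1 b /\ hm a b w.
Proof.
move=> Hz; elim: n w => [|n IH] w; first by move=> /hpow1 ->; exists r, x.
case/hpowS=> w' [Hw' Hw]; have [a [b [Ha [Hb Hab]]]] := IH _ Hw'.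
(* w lies in (a o b) o (r o x), which regroups into (a o r) o (b o x) *)
have [v [Hv Hav]] := hmA_lr Hab Hw.
have [t [Ht Htv]] := hmA_rl Hz Hv.
have [s [Hs Hrs]] := hmA_lr (hm_comm Ht) Htv.
have [a' [Ha' Ha's]] := hmA_rl Hrs Hav.
by exists a', s; split; [apply/hpowS; exists a|split; first by apply/hpowS; exists b].
Qed.

End HyperringPowers.

Section GoodEndomorphism.
Variables (R : zmodType) (hm : R -> R -> hset R) (alpha : R -> R).
Hypothesis halpha : good_endo hm alpha.

Lemma good_endo0 : alpha 0 = 0.
Proof. by apply: (@addrI _ (alpha 0)); rewrite -halpha.1 !addr0. Qed.

Lemma good_endoB x y : alpha (x - y) = alpha x - alpha y.
Proof.
have alphaN : alpha (- y) = - alpha y.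
  by apply/esym/addr0_eq; rewrite -halpha.1 subrr good_endo0.
by rewrite halpha.1 alphaN.
Qed.

Lemma hm_morph x y z : hm x y z -> hm (alpha x) (alpha y) (alpha z).
Proof. by move=> Hz; apply: (halpha.2 x y).1; exists z. Qed.

Lemma hpow_morph r n z : hpow hm r n.+1 z -> hpow hm (alpha r) n.+1 (alpha z).
Proof.
elim: n z => [|n IH] z; first by move=> /hpow1 ->.
by case/hpowS=> a [Ha Hz]; apply/hpowS; exists (alpha a); split; [exact: IH|exact: hm_morph].
Qed.

End GoodEndomorphism.

Section Hyperideals.
Variables (R : zmodType) (hm : R -> R -> hset R).

Definition hpreim (alpha : R -> R) (I : hset R) : hset R := fun w => I (alpha w).

Definition hradical (J : hset R) : hset R :=
  fun r => exists n, hsub (hpow hm r n.+1) J.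

Lemma hyperideal_ext (A B : hset R) :
  (forall x, A x <-> B x) -> hyperideal hm A -> hyperideal hm B.
Proof.
move=> AB [[x Ax] [AsubB Amul]]; split; first by exists x; apply/AB.
split=> [y z /AB Ay /AB Az|r y /AB Ay z Hz]; apply/AB; first exact: AsubB.
exact: Amul Hz.
Qed.

Variable J : hset R.
Hypothesis HJ : hyperideal hm J.

Lemma hyperideal0 : J 0.
Proof. by have [[x Jx] [JB _]] := HJ; rewrite -(subrr x); apply: JB. Qed.

Lemma hyperidealN x : J x -> J (- x).
Proof. by move=> Jx; rewrite -sub0r; apply: HJ.2.1 hyperideal0 Jx. Qed.

Lemma hyperidealD x y : J x -> J y -> J (x + y).
Proof. by move=> Jx Jy; rewrite -[y]opprK; apply: HJ.2.1 Jx (hyperidealN Jy). Qed.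

Lemma hyperideal_mull r x z : J x -> hm r x z -> J z.
Proof. by move=> Jx; apply: HJ.2.2. Qed.

Lemma hyperideal_hpreim alpha : good_endo hm alpha -> hyperideal hm (hpreim alpha J).
Proof.
move=> halpha; split.
  by exists 0; rewrite /hpreim (good_endo0 halpha); apply: hyperideal0.
split=> [x y Jx Jy|r x Jx z Hz]; rewrite /hpreim.
  by rewrite (good_endoB halpha); apply: HJ.2.1.
exact: hyperideal_mull Jx (hm_morph halpha Hz).
Qed.

End Hyperideals.

Section CHyperideals.
Variables (R : zmodType) (hm : R -> R -> hset R) (J : hset R).
Hypothesis HJ : C_hyperideal hm J.

Lemma C_hyperideal_hm a b z : hm a b z -> J z -> hsub (hm a b) J.
Proof.
move=> Hz Jz u Hu; apply: (HJ.2 a [:: b]); last exact/hprodL1.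
by exists z; split; first exact/hprodL1.
Qed.

Lemma C_hyperideal_hpow r n a : hpow hm r n a -> J a -> hsub (hpow hm r n) J.
Proof. by move=> Ha Ja; apply: HJ.2; exists a. Qed.

Lemma C_hyperideal_hpow_preim alpha r n a : good_endo hm alpha ->
  hpow hm r n.+1 a -> J (alpha a) -> hsub (hpow hm r n.+1) (hpreim alpha J).
Proof.
move=> halpha Ha Ja u Hu.
exact: C_hyperideal_hpow (hpow_morph halpha Ha) Ja _ (hpow_morph halpha Hu).
Qed.

End CHyperideals.

Section Binomial.
Variables (R : zmodType) (hm : R -> R -> hset R).
Hypotheses (hmR : mult_hyperring hm) (hmC : hcommutative hm) (hm0 : zero_absorbing hm).

Inductive hsums (P : hset R) : hset R :=
| hsums0 : hsums P 0
| hsumsD w s : P w -> hsums P s -> hsums P (w + s).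

Lemma hsums_add P s t : hsums P s -> hsums P t -> hsums P (s + t).
Proof.
elim=> [|w s' Pw _ IH] Pt; first by rewrite add0r.
by rewrite -addrA; apply: hsumsD (IH Pt).
Qed.

Lemma hsums_mulr (P Q : hset R) c s z :
  (forall w u, P w -> hm w c u -> Q u) -> hsums P s -> hm s c z -> hsums Q z.
Proof.
move=> PQ Ps; elim: Ps z => [|w s' Pw _ IH] z Hz.
  by have [[/(_ z Hz) -> _] _] := hm0 c; exact: hsums0.
have [_ [_ [_ [hmDl _]]]] := hmR.
have [p [q [Hp [Hq ->]]]] := hmDl _ _ _ _ Hz.
exact: hsumsD (PQ _ _ Pw Hp) (IH _ Hq).
Qed.

Variables x y : R.

Inductive monomial : nat -> nat -> R -> Prop :=
| monomialX i w : hpow hm x i.+1 w -> monomial i.+1 0 w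
| monomialY j w : hpow hm y j.+1 w -> monomial 0 j.+1 w
| monomialXY i j a b w :
    hpow hm x i.+1 a -> hpow hm y j.+1 b -> hm a b w -> monomial i.+1 j.+1 w.

Definition monomial_deg (k : nat) : hset R :=
  fun w => exists i j, (i + j)%N = k /\ monomial i j w.

Lemma monomial_mulx i j w z : monomial i j w -> hm w x z -> monomial i.+1 j z.
Proof.
case=> {i j w} [i w Hw|j w Hw|i j a b w Ha Hb Hw] Hz.
- by apply: monomialX; apply/hpowS; exists w.
- exact: monomialXY (hm_comm hmC Hz).
- have [v [Hv Hz']] := hmA_lr hmR Hw Hz.
  have [d [Hd Hz'']] := hmA_rl hmR (hm_comm hmC Hv) Hz'.
  by apply: monomialXY Hb Hz''; apply/hpowS; exists a.
Qed.

Lemma monomial_muly i j w z : monomial i j w -> hm w y z -> monomial i j.+1 z.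
Proof.
case=> {i j w} [i w Hw|j w Hw|i j a b w Ha Hb Hw] Hz.
- exact: monomialXY Hz.
- by apply: monomialY; apply/hpowS; exists w.
- have [v [Hv Hz']] := hmA_lr hmR Hw Hz.
  by apply: monomialXY Ha _ Hz'; apply/hpowS; exists b.
Qed.

Lemma hpow_addr_hsums k z : hpow hm (x + y) k.+1 z -> hsums (monomial_deg k.+1) z.
Proof.
elim: k z => [|k IH] z.
  move=> /hpow1 ->; rewrite -[y]addr0.
  apply: (hsumsD (w := x)); first by exists 1%N, 0%N; split=> //; apply: monomialX.
  apply: (hsumsD (w := y)); last exact: hsums0.
  by exists 0%N, 1%N; split=> //; apply: monomialY.
case/hpowS=> a [Ha Hz]; have [_ [_ [hmDr _]]] := hmR.
have [p [q [Hp [Hq ->]]]] := hmDr _ _ _ _ Hz.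
apply: hsums_add.
  apply: hsums_mulr (IH _ Ha) Hp => w u [i [j [<- Hw]]] Hu.
  by exists i.+1, j; split; [rewrite addSn|exact: monomial_mulx Hw Hu].
apply: hsums_mulr (IH _ Ha) Hq => w u [i [j [<- Hw]]] Hu.
by exists i, j.+1; split; [rewrite addnS|exact: monomial_muly Hw Hu].
Qed.

End Binomial.

Section Radical.
Variables (R : zmodType) (hm : R -> R -> hset R).
Hypotheses (hmR : mult_hyperring hm) (hmC : hcommutative hm) (hm0 : zero_absorbing hm).
Variable J : hset R.
Hypothesis HJ : hyperideal hm J.

Lemma hpow_sub_ge r n k : hsub (hpow hm r n.+1) J -> (n < k)%N -> hsub (hpow hm r k) J.
Proof.
move=> Jr; elim: k => // k IH; rewrite ltnS leq_eqVlt => /predU1P [<- //|lt_nk] z.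
case: k lt_nk IH => // k lt_nk IH /hpowS [a [Ha Hz]].
exact (hyperideal_mull HJ (IH lt_nk a Ha) (hm_comm hmC Hz)).
Qed.

Lemma hsums_sub (P : hset R) : hsub P J -> hsub (hsums P) J.
Proof.
move=> PJ s; elim=> [|w s' Pw _ Js']; first exact: hyperideal0 HJ.
exact (hyperidealD HJ (PJ _ Pw) Js').
Qed.

Lemma monomial_sub x y n m i j w :
  hsub (hpow hm x n.+1) J -> hsub (hpow hm y m.+1) J ->
  monomial hm x y i j w -> (i + j)%N = (n + m).+2 -> J w.
Proof.
move=> Jx Jy; case=> {i j w} [i w Hw|j w Hw|i j a b w Ha Hb Hw] Hij.
- by apply: hpow_sub_ge Jx _ _ Hw; lia.
- by apply: hpow_sub_ge Jy _ _ Hw; lia.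
- have [lt_ni|lt_mj] : (n < i.+1)%N \/ (m < j.+1)%N by lia.
    exact (hyperideal_mull HJ (hpow_sub_ge Jx lt_ni Ha) (hm_comm hmC Hw)).
  exact (hyperideal_mull HJ (hpow_sub_ge Jy lt_mj Hb) Hw).
Qed.

Lemma hradicalD x y : hradical hm J x -> hradical hm J y -> hradical hm J (x + y).
Proof.
move=> [n Jx] [m Jy]; exists (n + m).+1 => z /(hpow_addr_hsums hmR hmC hm0).
by apply: hsums_sub => w [i [j [Hij Hw]]]; apply: monomial_sub Jx Jy Hw Hij.
Qed.

Lemma hradicalN x : hradical hm J x -> hradical hm J (- x).
Proof.
move=> [n Jx]; exists n => z /(hpow_opp hmR) [/Jx //|/Jx /(hyperidealN HJ)].
by rewrite opprK.
Qed.

Lemma hradical_mull r x z : hradical hm J x -> hm r x z -> hradical hm J z.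
Proof.
move=> [n Jx] Hz; exists n => w /(hpowMn hmR hmC Hz) [a [b [_ [Hb Hw]]]].
exact (hyperideal_mull HJ (Jx _ Hb) Hw).
Qed.

Lemma hyperideal_hradical : hyperideal hm (hradical hm J).
Proof.
split; first by exists 0, 0%N => z /hpow1 ->; exact: hyperideal0 HJ.
split=> [x y Jx Jy|r x Jx z]; last exact: hradical_mull.
exact: hradicalD Jx (hradicalN Jy).
Qed.

End Radical.

Section AlphaRadical.
Variables (R : zmodType) (hm : R -> R -> hset R) (alpha : R -> R) (I : hset R).
Hypotheses (hmR : mult_hyperring hm) (hmC : hcommutative hm) (halpha : good_endo hm alpha).

Lemma alpha_radicalE r : alpha_radical hm alpha I r <-> hradical hm (hpreim alpha I) r.
Proof.
split=> [[[|n] [// _ Ir]]|[n Ir]]; first by exists n => z Hz; apply: Ir; exists z.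
by exists n.+1; split=> // _ [z [Hz ->]]; apply: Ir.
Qed.

Lemma hyperideal_alpha_radical : zero_absorbing hm -> hyperideal hm I ->
  hyperideal hm (alpha_radical hm alpha I).
Proof.
move=> hm0 HI; apply: hyperideal_ext (fun r => iff_sym (alpha_radicalE r)) _.
exact/(hyperideal_hradical hmR hmC hm0)/hyperideal_hpreim.
Qed.

Hypothesis HIC : C_hyperideal hm I.
Hypothesis HI_prime : forall a b : R, hsub (hm a b) I ->
  I a \/ exists n : nat, (0 < n)%N /\ hsub (himg alpha (hpow hm b n)) I.

Lemma alpha_radical_prime x y : hsub (hm x y) (alpha_radical hm alpha I) ->
  alpha_radical hm alpha I x \/ alpha_radical hm alpha I (alpha y).
Proof.
move=> Hxy; have [z Hz] := hm_nonempty hmR x y.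
have /alpha_radicalE [n Izn] := Hxy z Hz.
have [w Hw] := hpow_ex hmR z n.
have [a [b [Ha [Hb Hab]]]] := hpowMn hmR hmC Hz Hw.
have Iab : hsub (hm (alpha a) (alpha b)) I.
  exact (C_hyperideal_hm HIC (hm_morph halpha Hab) (Izn w Hw)).
case: (HI_prime Iab) => [Ia|[[|m] [// _ Ibm]]].
  by left; apply/alpha_radicalE; exists n; apply: (C_hyperideal_hpow_preim HIC halpha Ha).
right; apply/alpha_radicalE; exists (n.+1 * m.+1).-1; rewrite prednK ?muln_gt0 //.
have [e He] := hpow_ex hmR (alpha b) m.
have Hye := hpowM hmR (hpow_morph halpha Hb) He.
by apply: (C_hyperideal_hpow_preim HIC halpha Hye); apply: Ibm; exists e.
Qed.

End AlphaRadical.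

Theorem mainTheorem16 (R : zmodType) (hm : R -> R -> hset R) (one : R)
  (alpha : R -> R) (I : hset R) :
  mult_hyperring hm -> hcommutative hm -> hidentity hm one -> zero_absorbing hm ->
  (* standing assumption: every hyperideal of R is a C-hyperideal *)
  (forall J : hset R, hyperideal hm J -> C_hyperideal hm J) ->
  good_endo hm alpha ->
  hyperideal hm I ->
  (forall a b : R, hsub (hm a b) I ->
     I a \/ exists n : nat, (0 < n)%N /\ hsub (himg alpha (hpow hm b n)) I) ->
  alpha_prime hm alpha (alpha_radical hm alpha I).
Proof.
move=> hmR hmC _ hm0 allC halpha HI HI_prime.
split; first exact/allC/hyperideal_alpha_radical.
exact: alpha_radical_prime (allC _ HI) HI_prime.
Qed.
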